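(* Let $a>0$, $\alpha\in[0,1)$, $f\in\mathcal C_a$ and $\eta\in(0,1)$. Then $\mathrm{Sh}_\alpha(f^{\pm\eta})=(\mathrm{Sh}_\alpha(f))^{\pm\eta}$.
   Context: For $b>0$, $\mathcal C_b$ is the set of $C^1$ functions $f:\mathbb R\to\mathbb R$ that are even, satisfy $f(s)=|s|$ for $|s|\ge b$ and are strictly convex on $[-b,b]$. For any function $g:\mathbb R\to\mathbb R$, $g^{\pm\eta}(s)=(1\pm\frac\eta2)g\big(s/(1\pm\frac\eta2)\big)$; if $f\in\mathcal C_a$ then $f^{\pm\eta}\in\mathcal C_{(2\pm\eta)a/2}$. For $f\in\mathcal C_b$: $F_\alpha(s)=f(s)-\alpha s$, $x_\alpha^+=(f')^{-1}(\alpha)\in[0,b)$ (inverse of $f':[-b,b]\to[-1,1]$); let $F_\alpha^{-1}$ be the inverse of $F_\alpha|_{[x_\alpha^+,\infty)}$, $\phi=F_\alpha^{-1}\circ F_\alpha$, $\delta_x=(1-\alpha)^{-1}F_\alpha(x)-\phi(x)$, $s_\alpha=x_\alpha^++\delta_{x_\alpha^+}$; $x\mapsto x+\delta_x$ is an increasing bijection $(-\infty,x_\alpha^+]\to(-\infty,s_\alpha]$ with inverse $\tau$. Define $\mathrm{Sh}_\alpha(f)(x)=\alpha x+F_\alpha(\tau(x))$ for $x\le s_\alpha$ and $=x$ for $x>s_\alpha$. The identity holds for both signs. *)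

From Stdlib Require Import Reals ClassicalEpsilon.
From Coquelicot Require Import Coquelicot.
Open Scope R_scope.

Definition is_C1 (f : R -> R) : Prop :=
  forall x, ex_derive f x /\ continuous (Derive f) x.

Definition even_fun (f : R -> R) : Prop := forall s, f (- s) = f s.

Definition strictly_convex_on (a b : R) (f : R -> R) : Prop :=
  forall x y t, a <= x <= b -> a <= y <= b -> x <> y -> 0 < t < 1 ->
    f (t * x + (1 - t) * y) < t * f x + (1 - t) * f y.

Definition class_C (b : R) (f : R -> R) : Prop :=
  is_C1 f /\ even_fun f /\ (forall s, b <= Rabs s -> f s = Rabs s)
  /\ strictly_convex_on (- b) b f.

(* g^{+eta} (sgn = true) and g^{-eta} (sgn = false):
   g^{±eta}(s) = (1 ± eta/2) g (s / (1 ± eta/2)) *)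
Definition pm_factor (sgn : bool) (eta : R) : R :=
  if sgn then 1 + eta / 2 else 1 - eta / 2.

Definition pm_scale (sgn : bool) (eta : R) (g : R -> R) : R -> R :=
  fun s => pm_factor sgn eta * g (s / pm_factor sgn eta).

(* the (chosen) inverse of g restricted to the set P, evaluated at y:
   some x with P x and g x = y (unique when g is injective on P) *)
Definition inv_on (P : R -> Prop) (g : R -> R) (y : R) : R :=
  epsilon (inhabits 0) (fun x => P x /\ g x = y).

Section Shift.
Variables (alpha : R) (f : R -> R).

Definition F_al (s : R) : R := f s - alpha * s.

Definition x_plus : R := epsilon (inhabits 0) (fun x => Derive f x = alpha).

Definition F_al_inv (y : R) : R := inv_on (fun z => x_plus <= z) F_al y.

Definition phi_al (x : R) : R := F_al_inv (F_al x).

Definition delta_al (x : R) : R := / (1 - alpha) * F_al x - phi_al x.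

Definition s_al : R := x_plus + delta_al x_plus.

Definition tau_al (y : R) : R :=
  inv_on (fun x => x <= x_plus) (fun x => x + delta_al x) y.

Definition Sh (x : R) : R :=
  if Rle_dec x s_al then alpha * x + F_al (tau_al x) else x.

End Shift.

From Stdlib Require Import Reals ClassicalEpsilon Lra.
From Coquelicot Require Import Coquelicot.
Open Scope R_scope.

(* Every ingredient of Sh_alpha -- F_alpha, x_alpha^+, F_alpha^{-1}, phi, delta, s_alpha
   and tau -- is built from f by operations that commute with the dilation
   f |-> c f(./c): each transforms as X_g (c x) = c X_f x.  The inverses are
   defined by a choice operator, so this equivariance needs each defining
   equation to have exactly one solution.  For f in C_a this comes from f'
   being continuous, equal to -1 and 1 outside [-a, a] and strictly increasing
   on [-a, a] (strict convexity): F_alpha is then strictly increasing on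
   [x_alpha^+, oo) with slope at most 1 - alpha, which makes x |-> x + delta_x
   continuous and strictly increasing on (-oo, x_alpha^+]. *)

Lemma epsilon_unique (P : R -> Prop) (x : R) :
  P x -> (forall y, P y -> y = x) -> epsilon (inhabits 0) P = x.
Proof. intros Px Puniq. apply Puniq, epsilon_spec. now exists x. Qed.

Lemma epsilon_scale (P Q : R -> Prop) (c : R) :
  c <> 0 -> (forall x, Q (c * x) <-> P x) -> (exists! x, P x) ->
  epsilon (inhabits 0) Q = c * epsilon (inhabits 0) P.
Proof.
  intros Hc HQ [x [Px Puniq]].
  rewrite (epsilon_unique P x) by (auto; intros y Py; symmetry; auto).
  apply epsilon_unique; [now apply HQ|].
  intros y Qy. replace y with (c * (y / c)) in Qy |- * by (field; auto).
  now rewrite <- (Puniq (y / c)) by now apply HQ.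
Qed.

Lemma derive_nonneg_le (h dh : R -> R) (x y : R) :
  x <= y -> (forall t, x <= t <= y -> is_derive h t (dh t)) ->
  (forall t, x <= t <= y -> 0 <= dh t) -> h x <= h y.
Proof.
  intros Hxy Hd Hpos.
  destruct (MVT_gen h x y dh) as [c [Hc Heq]];
    rewrite ?Rmin_left, ?Rmax_right in * by lra.
  - intros t Ht. apply Hd. lra.
  - intros t Ht. apply continuity_pt_filterlim.
    apply (ex_derive_continuous (K := R_AbsRing) (V := R_NormedModule)).
    exists (dh t). now apply Hd.
  - specialize (Hpos c Hc). nra.
Qed.

Lemma derive_pos_lt (h dh : R -> R) (x y : R) :
  x < y -> (forall t, x <= t <= y -> is_derive h t (dh t)) ->
  (forall t, x <= t <= y -> 0 <= dh t) -> (forall t, x < t <= y -> 0 < dh t) ->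
  h x < h y.
Proof.
  intros Hxy Hd Hnneg Hpos. set (m := (x + y) / 2).
  apply Rle_lt_trans with (h m).
  - apply derive_nonneg_le with dh; intros; unfold m in *; try apply Hd; try apply Hnneg; lra.
  - apply (incr_function_le h m y dh); simpl; intros; unfold m in *;
      try apply Hd; try apply Hpos; lra.
Qed.

Lemma continuity_pt_eq_right (g : R -> R) (x c : R) :
  continuity_pt g x -> (forall y, x < y -> g y = c) -> g x = c.
Proof.
  intros Hg Hright.
  apply (filterlim_locally_unique (F := at_right x) g).
  - apply (filterlim_filter_le_1 (F := locally x)); [apply filter_le_within|].
    now apply continuity_pt_filterlim.
  - apply filterlim_ext_loc with (fun _ => c); [|apply filterlim_const].
    exists (mkposreal 1 Rlt_0_1). intros y _ Hy. now rewrite Hright.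
Qed.

Lemma ball_0_Rabs (d : posreal) (t : R) : ball 0 d t -> Rabs t < d.
Proof.
  unfold ball; simpl; unfold AbsRing_ball, abs, minus, plus, opp; simpl.
  now rewrite Ropp_0, Rplus_0_r.
Qed.

Lemma is_derive_quotient_at_right (g : R -> R) (x l : R) :
  is_derive g x l -> filterlim (fun t => (g (x + t) - g x) / t) (at_right 0) (locally l).
Proof.
  intros Hg P [eps HP]. apply is_derive_Reals in Hg.
  destruct (Hg eps (cond_pos eps)) as [d Hd].
  exists d. intros t Ht Htpos. apply HP.
  apply Hd; [lra | now apply ball_0_Rabs].
Qed.

Lemma strictly_convex_tangent (lo hi : R) (f : R -> R) (x z l : R) :
  strictly_convex_on lo hi f -> lo <= x <= hi -> lo <= z <= hi ->
  is_derive f x l -> l * (z - x) <= f z - f x.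
Proof.
  intros Hconv Hx Hz Hf.
  destruct (Req_dec x z) as [<-|Hxz]; [lra|].
  set (g := fun t => f (x + t * (z - x))).
  assert (Hg : is_derive g 0 (l * (z - x))).
  { rewrite Rmult_comm. unfold g. apply (is_derive_comp f (fun t => x + t * (z - x))).
    - rewrite Rmult_0_l, Rplus_0_r. exact Hf.
    - auto_derive; [exact I | ring]. }
  change (Rbar_le (l * (z - x)) (f z - f x)).
  apply (filterlim_le (F := at_right 0)
    (fun t => (g (0 + t) - g 0) / t) (fun _ => f z - f x));
    [| now apply is_derive_quotient_at_right | apply filterlim_const].
  exists (mkposreal 1 Rlt_0_1). intros t Ht Htpos.
  apply ball_0_Rabs in Ht. rewrite Rabs_pos_eq in Ht by lra. simpl in Ht.
  assert (Hc := Hconv z x t Hz Hx (not_eq_sym Hxz) (conj Htpos Ht)).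
  unfold g. rewrite Rplus_0_l, Rmult_0_l, Rplus_0_r.
  replace (x + t * (z - x)) with (t * z + (1 - t) * x) by ring.
  apply Rmult_le_reg_r with t; [lra|]. field_simplify; lra.
Qed.

Lemma strictly_convex_derive_lt (lo hi : R) (f : R -> R) (x y lx ly : R) :
  strictly_convex_on lo hi f -> lo <= x -> x < y -> y <= hi ->
  is_derive f x lx -> is_derive f y ly -> lx < ly.
Proof.
  intros Hconv Hlo Hxy Hhi Hx Hy. set (m := (x + y) / 2).
  assert (Hmid := Hconv x y (1/2) ltac:(lra) ltac:(lra) ltac:(lra) ltac:(lra)).
  replace (1 / 2 * x + (1 - 1 / 2) * y) with m in Hmid by (unfold m; field).
  assert (Tx := strictly_convex_tangent lo hi f x m lx Hconv ltac:(lra) ltac:(unfold m; lra) Hx).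
  assert (Ty := strictly_convex_tangent lo hi f y m ly Hconv ltac:(lra) ltac:(unfold m; lra) Hy).
  unfold m in *. nra.
Qed.

Lemma inv_on_spec (P : R -> Prop) (h : R -> R) (y : R) :
  (exists x, P x /\ h x = y) -> P (inv_on P h y) /\ h (inv_on P h y) = y.
Proof. apply (epsilon_spec (inhabits 0) (fun x => P x /\ h x = y)). Qed.

Lemma continuity_pt_inv_on_comp (h k : R -> R) (l x0 : R) :
  (forall x y, l <= x -> x < y -> h x < h y) ->
  (forall x, exists z, l <= z /\ h z = k x) ->
  continuity_pt k x0 ->
  continuity_pt (fun x => inv_on (fun z => l <= z) h (k x)) x0.
Proof.
  intros Hincr Hrange Hk.
  set (g := fun x => inv_on (fun z => l <= z) h (k x)).
  assert (Hg : forall x, l <= g x /\ h (g x) = k x) by (intro; now apply inv_on_spec).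
  assert (Hincr_rev : forall x y, l <= x -> l <= y -> h x < h y -> x < y).
  { intros x y Hx Hy Hlt. destruct (Rlt_or_le x y) as [|Hyx]; [assumption|].
    destruct (Rle_lt_or_eq_dec _ _ Hyx) as [Hyx'|<-]; [pose proof (Hincr y x Hy Hyx')|]; lra. }
  assert (Hk_near : forall P, open P -> P (k x0) -> locally x0 (fun x => P (k x))).
  { intros P HP HPk. now apply (proj1 (continuity_pt_filterlim k x0) Hk), HP. }
  apply continuity_pt_locally. intros eps. fold g.
  destruct (Hg x0) as [Hl0 Hh0]. set (w0 := g x0) in *.
  pose proof (cond_pos eps) as Heps.
  assert (Hupper : locally x0 (fun x => g x < w0 + eps)).
  { apply filter_imp with (fun x => k x < h (w0 + eps)).
    - intros x Hx. apply Hincr_rev; [apply Hg | lra | now rewrite (proj2 (Hg x))].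
    - apply (Hk_near (fun v => v < h (w0 + eps))); [apply open_lt|].
      rewrite <- Hh0. apply Hincr; lra. }
  assert (Hlower : locally x0 (fun x => w0 - eps < g x)).
  { destruct (Rlt_or_le (w0 - eps) l) as [Hbelow|Habove].
    - apply filter_forall. intro x. pose proof (proj1 (Hg x)). lra.
    - apply filter_imp with (fun x => h (w0 - eps) < k x).
      + intros x Hx. apply Hincr_rev; [lra | apply Hg | now rewrite (proj2 (Hg x))].
      + apply (Hk_near (fun v => h (w0 - eps) < v)); [apply open_gt|].
        rewrite <- Hh0. apply Hincr; lra. }
  apply filter_imp with (fun x => g x < w0 + eps /\ w0 - eps < g x).
  - intros x [Hu Hl']. apply Rabs_def1; lra.
  - now apply filter_and.
Qed.

Section ClassC.
Variables (a : R) (f : R -> R).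
Hypotheses (Ha : 0 < a) (Hf : class_C a f).

Lemma class_C_is_derive x : is_derive f x (Derive f x).
Proof. apply Derive_correct, (proj1 (proj1 Hf x)). Qed.

Lemma class_C_Derive_right s : a <= s -> Derive f s = 1.
Proof.
  destruct Hf as [HC1 [_ [Habs _]]].
  assert (Hgt : forall t, a < t -> Derive f t = 1).
  { intros t Ht. apply is_derive_unique, is_derive_ext_loc with (fun u => u).
    - apply filter_imp with (fun u => a < u); [|now apply open_gt].
      intros u Hu. rewrite Habs; rewrite Rabs_pos_eq; lra.
    - apply (is_derive_id (K := R_AbsRing)). }
  intros [Hs|<-]; [now apply Hgt|].
  apply continuity_pt_eq_right; [|exact Hgt].
  apply continuity_pt_filterlim, (proj2 (HC1 a)).
Qed.

Lemma class_C_Derive_left s : s < -a -> Derive f s = -1.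
Proof.
  destruct Hf as [_ [_ [Habs _]]]. intros Hs.
  apply is_derive_unique, is_derive_ext_loc with (fun u => - u).
  - apply filter_imp with (fun u => u < -a); [|now apply open_lt].
    intros u Hu. rewrite Habs; rewrite Rabs_left; lra.
  - auto_derive; [exact I | ring].
Qed.

Lemma class_C_Derive_lt x y : -a <= x -> x < y -> y <= a -> Derive f x < Derive f y.
Proof.
  intros. apply (strictly_convex_derive_lt (- a) a f x y); try apply class_C_is_derive; auto.
  apply Hf.
Qed.

Lemma class_C_Derive_le_1 x : Derive f x <= 1.
Proof.
  destruct (Rle_or_lt a x) as [Hax|Hxa]; [rewrite class_C_Derive_right; lra|].
  destruct (Rlt_or_le x (- a)) as [Hxa'|Hax']; [rewrite class_C_Derive_left; lra|].
  rewrite <- (class_C_Derive_right a) by lra. left. apply class_C_Derive_lt; lra.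
Qed.

Section XPlus.
Variable alpha : R.
Hypothesis Hal : -1 < alpha < 1.

Lemma class_C_Derive_eq_bounds x : Derive f x = alpha -> -a <= x < a.
Proof.
  intros Hx. destruct (Rle_or_lt a x); [rewrite class_C_Derive_right in Hx; lra|].
  destruct (Rlt_or_le x (- a)); [rewrite class_C_Derive_left in Hx; lra|]. lra.
Qed.

Lemma class_C_Derive_eq_unique : exists! x, Derive f x = alpha.
Proof.
  destruct (IVT_gen (Derive f) (- a - 1) (a + 1) alpha) as [x [_ Hx]].
  - intro t. apply continuity_pt_filterlim, (proj2 (proj1 Hf t)).
  - rewrite class_C_Derive_left, class_C_Derive_right by lra.
    rewrite Rmin_left, Rmax_right; lra.
  - exists x. split; [exact Hx|]. intros y Hy.
    pose proof (class_C_Derive_eq_bounds x Hx). pose proof (class_C_Derive_eq_bounds y Hy).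
    destruct (Rtotal_order x y) as [Hxy|[Hxy|Hxy]]; [|exact Hxy|];
      [pose proof (class_C_Derive_lt x y) | pose proof (class_C_Derive_lt y x)]; lra.
Qed.

Lemma x_plus_spec : Derive f (x_plus alpha f) = alpha /\ -a <= x_plus alpha f < a.
Proof.
  destruct class_C_Derive_eq_unique as [x [Hx _]].
  assert (Hxp : Derive f (x_plus alpha f) = alpha).
  { apply (epsilon_spec (inhabits 0) (fun x => Derive f x = alpha)). now exists x. }
  split; [exact Hxp|]. now apply class_C_Derive_eq_bounds.
Qed.

Lemma class_C_Derive_lt_alpha t : t < x_plus alpha f -> Derive f t < alpha.
Proof.
  intros Ht. destruct x_plus_spec as [Hxp Hb].
  destruct (Rlt_or_le t (- a)) as [Hta|Hta].
  - rewrite class_C_Derive_left by lra. lra.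
  - pose proof (class_C_Derive_lt t (x_plus alpha f)). lra.
Qed.

Lemma class_C_Derive_gt_alpha t : x_plus alpha f < t -> alpha < Derive f t.
Proof.
  intros Ht. destruct x_plus_spec as [Hxp Hb].
  destruct (Rle_or_lt a t) as [Hta|Hta].
  - rewrite class_C_Derive_right by lra. lra.
  - pose proof (class_C_Derive_lt (x_plus alpha f) t). lra.
Qed.

Section Shift.
Hypothesis Hal_nonneg : 0 <= alpha.

Notation F := (F_al alpha f).
Notation xp := (x_plus alpha f).
Notation G := (F_al_inv alpha f).
Notation delta := (delta_al alpha f).

Lemma F_al_is_derive t : is_derive F t (Derive f t - alpha).
Proof.
  unfold F_al. auto_derive; [apply Hf|].
  change (Derive (fun x => f x)) with (Derive f). ring.
Qed.

Lemma F_al_continuous x : continuity_pt F x.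
Proof.
  apply continuity_pt_filterlim.
  apply (ex_derive_continuous (K := R_AbsRing) (V := R_NormedModule)).
  eexists. apply F_al_is_derive.
Qed.

Lemma F_al_increasing x y : xp <= x -> x < y -> F x < F y.
Proof.
  intros Hx Hxy. destruct x_plus_spec as [Hxp _].
  apply (derive_pos_lt F (fun t => Derive f t - alpha)); auto.
  - intros t _. apply F_al_is_derive.
  - intros t Ht. destruct (Req_dec t xp) as [->|Hne]; [lra|].
    pose proof (class_C_Derive_gt_alpha t). lra.
  - intros t Ht. pose proof (class_C_Derive_gt_alpha t). lra.
Qed.

Lemma F_al_nonincreasing x y : x <= y -> y <= xp -> F y <= F x.
Proof.
  intros Hxy Hy. destruct x_plus_spec as [Hxp _].
  enough (- F x <= - F y) by lra.
  apply (derive_nonneg_le (fun s => - F s) (fun t => alpha - Derive f t)); auto.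
  - intros t _. unfold F_al. auto_derive; [apply Hf|].
    change (Derive (fun x => f x)) with (Derive f). ring.
  - intros t Ht. destruct (Req_dec t xp) as [->|Hne]; [lra|].
    pose proof (class_C_Derive_lt_alpha t). lra.
Qed.

Lemma F_al_x_plus_le x : F xp <= F x.
Proof.
  destruct (Rle_or_lt xp x).
  - destruct (Req_dec xp x) as [->|]; [lra|]. left; apply F_al_increasing; lra.
  - apply F_al_nonincreasing; lra.
Qed.

Lemma F_al_slope_le w w' : w <= w' -> F w' - F w <= (1 - alpha) * (w' - w).
Proof.
  intros Hw.
  enough ((1 - alpha) * w - F w <= (1 - alpha) * w' - F w') by lra.
  apply (derive_nonneg_le (fun s => (1 - alpha) * s - F s) (fun t => 1 - Derive f t)); auto.
  - intros t _. unfold F_al. auto_derive; [apply Hf|].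
    change (Derive (fun x => f x)) with (Derive f). ring.
  - intros t _. pose proof (class_C_Derive_le_1 t). lra.
Qed.

Lemma F_al_right s : a <= s -> F s = (1 - alpha) * s.
Proof.
  intros Hs. unfold F_al. destruct Hf as [_ [_ [Habs _]]].
  rewrite Habs; rewrite Rabs_pos_eq; lra.
Qed.

Lemma F_al_left s : s <= - a -> F s = - (1 + alpha) * s.
Proof.
  intros Hs. unfold F_al. destruct Hf as [_ [_ [Habs _]]].
  rewrite Habs; rewrite Rabs_left; lra.
Qed.

Lemma F_al_inv_unique u : F xp <= u -> exists! z, xp <= z /\ F z = u.
Proof.
  intros Hu. destruct x_plus_spec as [_ Hb].
  set (B := Rmax a (u / (1 - alpha))).
  assert (HB : a <= B /\ u <= F B).
  { unfold B. rewrite F_al_right by apply Rmax_l. split; [apply Rmax_l|].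
    replace u with ((1 - alpha) * (u / (1 - alpha))) at 1 by (field; lra).
    apply Rmult_le_compat_l; [lra | apply Rmax_r]. }
  destruct (IVT_gen F xp B u) as [z [Hz Fz]].
  - exact F_al_continuous.
  - rewrite Rmin_left, Rmax_right; lra.
  - rewrite Rmin_left in Hz by lra. exists z. split; [split; [lra | exact Fz]|].
    intros w [Hw Fw].
    destruct (Rtotal_order z w) as [Hzw|[Hzw|Hzw]]; [|exact Hzw|];
      [pose proof (F_al_increasing z w) | pose proof (F_al_increasing w z)]; lra.
Qed.

Lemma F_al_inv_spec u : F xp <= u -> xp <= G u /\ F (G u) = u.
Proof.
  intros Hu. apply inv_on_spec.
  destruct (F_al_inv_unique u Hu) as [z [Hz _]]. now exists z.
Qed.

Lemma F_al_inv_right u : (1 - alpha) * a <= u -> G u = u / (1 - alpha).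
Proof.
  intros Hu. destruct x_plus_spec as [_ Hb].
  assert (Hua : a <= u / (1 - alpha)).
  { apply Rmult_le_reg_l with (1 - alpha); [lra|].
    replace ((1 - alpha) * (u / (1 - alpha))) with u by (field; lra). lra. }
  assert (Hmin : F xp <= u).
  { replace u with (F (u / (1 - alpha))) by (rewrite F_al_right by lra; field; lra).
    apply F_al_x_plus_le. }
  destruct (F_al_inv_unique u Hmin) as [z [_ Hz]].
  rewrite <- (Hz (G u)) by now apply F_al_inv_spec.
  apply Hz. split; [lra|]. rewrite F_al_right by lra. field; lra.
Qed.

Lemma phi_al_continuous x : continuity_pt (phi_al alpha f) x.
Proof.
  apply (continuity_pt_inv_on_comp F F xp x F_al_increasing).
  - intro t. destruct (F_al_inv_unique (F t) (F_al_x_plus_le t)) as [z [Hz _]]. now exists z.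
  - apply F_al_continuous.
Qed.

Lemma delta_al_left x : x <= - a -> delta x = 0.
Proof.
  intros Hx. unfold delta_al, phi_al. rewrite F_al_left by lra.
  rewrite F_al_inv_right by nra. field; lra.
Qed.

Lemma id_plus_delta_al_continuous x : continuity_pt (fun x => x + delta x) x.
Proof.
  apply continuity_pt_plus; [apply continuity_pt_id|].
  apply continuity_pt_minus; [|apply phi_al_continuous].
  apply continuity_pt_scal, F_al_continuous.
Qed.

Lemma id_plus_delta_al_lt x y : x < y -> y <= xp -> x + delta x < y + delta y.
Proof.
  intros Hxy Hy. unfold delta_al, phi_al.
  pose proof (F_al_nonincreasing x y ltac:(lra) Hy) as HFxy.
  destruct (F_al_inv_spec (F x) (F_al_x_plus_le x)) as [Hpx Fpx].
  destruct (F_al_inv_spec (F y) (F_al_x_plus_le y)) as [Hpy Fpy].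
  set (px := G (F x)) in *. set (py := G (F y)) in *.
  assert (Hp : py <= px).
  { destruct (Rle_or_lt py px) as [|Hlt]; [assumption|].
    pose proof (F_al_increasing px py Hpx Hlt). lra. }
  (* slope <= 1 - alpha: phi moves at least as much as F / (1 - alpha) *)
  pose proof (F_al_slope_le py px Hp) as Hslope.
  assert (/ (1 - alpha) * (F x - F y) <= px - py).
  { apply Rmult_le_reg_l with (1 - alpha); [lra|].
    rewrite <- Rmult_assoc, Rinv_r, Rmult_1_l by lra. lra. }
  lra.
Qed.

Lemma tau_unique y : y <= s_al alpha f -> exists! x, x <= xp /\ x + delta x = y.
Proof.
  intros Hy. destruct x_plus_spec as [_ Hb].
  assert (Hex : exists x, x <= xp /\ x + delta x = y).
  { destruct (Rle_or_lt y (- a)) as [Hya|Hya].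
    - exists y. split; [lra|]. rewrite delta_al_left by lra. ring.
    - destruct (IVT_gen (fun x => x + delta x) (- a) xp y) as [x [Hx Hxy]].
      + exact id_plus_delta_al_continuous.
      + rewrite delta_al_left by lra. unfold s_al in Hy.
        rewrite Rmin_left, Rmax_right; lra.
      + rewrite Rmax_right in Hx by lra. now exists x. }
  destruct Hex as [x [Hx Hxy]]. exists x. split; [auto|].
  intros z [Hz Hzy].
  destruct (Rtotal_order x z) as [Hxz|[Hxz|Hxz]]; [|exact Hxz|];
    [pose proof (id_plus_delta_al_lt x z) | pose proof (id_plus_delta_al_lt z x)]; lra.
Qed.

End Shift.
End XPlus.
End ClassC.

Section Scaling.
Variables (alpha c : R) (f : R -> R).
Hypothesis Hc : 0 < c.
Hypothesis Hder : forall x, ex_derive f x.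
Hypothesis Hxp : exists! x, Derive f x = alpha.
Hypothesis Hinv : forall x, exists! z, x_plus alpha f <= z /\ F_al alpha f z = F_al alpha f x.
Hypothesis Htau : forall y, y <= s_al alpha f ->
  exists! x, x <= x_plus alpha f /\ x + delta_al alpha f x = y.

Let g := fun s => c * f (s / c).

Lemma Derive_scale x : Derive g (c * x) = Derive f x.
Proof.
  apply is_derive_unique. unfold g. auto_derive.
  - replace (c * x * / c) with x by (field; lra). apply Hder.
  - replace (c * x * / c) with x by (field; lra).
    change (Derive (fun x => f x)) with (Derive f). field. lra.
Qed.

Lemma F_al_scale s : F_al alpha g (c * s) = c * F_al alpha f s.
Proof. unfold F_al, g. replace (c * s / c) with s by (field; lra). ring. Qed.

Lemma x_plus_scale : x_plus alpha g = c * x_plus alpha f.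
Proof.
  apply epsilon_scale; [lra | | exact Hxp].
  intro x. now rewrite Derive_scale.
Qed.

Lemma phi_al_scale x : phi_al alpha g (c * x) = c * phi_al alpha f x.
Proof.
  unfold phi_al, F_al_inv, inv_on. rewrite F_al_scale.
  apply epsilon_scale; [lra | | exact (Hinv x)].
  intro z. rewrite x_plus_scale, F_al_scale. split.
  - intros [Hz Fz]. split; [now apply Rmult_le_reg_l with c|].
    now apply Rmult_eq_reg_l with c; [|lra].
  - intros [Hz Fz]. split; [now apply Rmult_le_compat_l; [lra|]|]. now rewrite Fz.
Qed.

Lemma delta_al_scale x : delta_al alpha g (c * x) = c * delta_al alpha f x.
Proof. unfold delta_al. rewrite phi_al_scale, F_al_scale. ring. Qed.

Lemma s_al_scale : s_al alpha g = c * s_al alpha f.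
Proof. unfold s_al. rewrite x_plus_scale, delta_al_scale. ring. Qed.

Lemma tau_al_scale y : y <= s_al alpha f -> tau_al alpha g (c * y) = c * tau_al alpha f y.
Proof.
  intros Hy. unfold tau_al, inv_on.
  apply epsilon_scale; [lra | | exact (Htau y Hy)].
  intro x. rewrite x_plus_scale, delta_al_scale. split.
  - intros [Hx Hxy]. split; [now apply Rmult_le_reg_l with c|].
    apply Rmult_eq_reg_l with c; [|lra]. lra.
  - intros [Hx Hxy]. split; [now apply Rmult_le_compat_l; [lra|]|]. rewrite <- Hxy. ring.
Qed.

Lemma Sh_scale x : Sh alpha g (c * x) = c * Sh alpha f x.
Proof.
  unfold Sh. rewrite s_al_scale.
  destruct (Rle_dec (c * x) (c * s_al alpha f)) as [Hle|Hgt];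
    destruct (Rle_dec x (s_al alpha f)) as [Hle'|Hgt'].
  - rewrite tau_al_scale, F_al_scale by exact Hle'. ring.
  - exfalso. apply Hgt'. now apply Rmult_le_reg_l with c.
  - exfalso. apply Hgt. now apply Rmult_le_compat_l; [lra|].
  - reflexivity.
Qed.

End Scaling.

Theorem proposition3p25 (a alpha eta : R) (f : R -> R) :
  0 < a -> 0 <= alpha < 1 -> class_C a f -> 0 < eta < 1 ->
  forall (sgn : bool) (x : R),
    Sh alpha (pm_scale sgn eta f) x = pm_scale sgn eta (Sh alpha f) x.
Proof.
  intros Ha Hal Hf Heta sgn x. unfold pm_scale.
  set (c := pm_factor sgn eta).
  assert (Hc : 0 < c) by (unfold c, pm_factor; destruct sgn; lra).
  replace x with (c * (x / c)) at 1 by (field; lra).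
  assert (Hal' : -1 < alpha < 1) by lra.
  assert (Hal0 : 0 <= alpha) by lra.
  apply Sh_scale; [exact Hc | | | |].
  - intro t. eexists. now apply class_C_is_derive with a.
  - now apply class_C_Derive_eq_unique with a.
  - intro t. apply F_al_inv_unique with a; auto. now apply F_al_x_plus_le with a.
  - intros y Hy. now apply tau_unique with a.
Qed.
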